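(* Suppose $f$ satisfies the separation property. Let $x\in\widetilde X$ with itinerary $\theta$, $t\geqslant 0$, $n\geqslant 1$. If $f^{t+n}(x)\in A_{i_1i_2\dots i_n}$ for some atom $A_{i_1\dots i_n}$, then $\theta_t\theta_{t+1}\dots\theta_{t+n-1}=i_1i_2\dots i_n$.
   Context: Let $(X,d)$ be a compact metric space, $X_1,\dots,X_N$ ($N\geqslant 2$) non-empty pairwise disjoint open subsets with $X=\bigcup_i\overline{X_i}$, $\Delta:=\{x\in\overline{X_i}\cap\overline{X_j}:i\neq j\}$, and $f:X\to X$ a map such that each $f|_{X_i}$ admits a continuous extension $f_i:\overline{X_i}\to X$. Separation property: each $f_i$ injective and $f_i(\overline{X_i})\cap f_j(\overline{X_j})=\emptyset$ for $i\neq j$. $\widetilde X:=\bigcap_{n\geqslant 0}f^{-n}(X\setminus\Delta)$; the itinerary of $x\in\widetilde X$ is $\theta$ with $\theta_t=i$ iff $f^t(x)\in X_i$. For $A\subset X$ let $F_i(A):=\overline{f(A\cap X_i)}$; $A_{i_1\dots i_n}:=F_{i_n}\circ\dots\circ F_{i_1}(X)$ is an atom of generation $n$ if non-empty. *)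

From HB Require Import structures.
From mathcomp Require Import all_boot all_order all_algebra.
From mathcomp Require Import all_classical all_reals all_analysis.
Set Implicit Arguments. Unset Strict Implicit. Unset Printing Implicit Defensive.
Import Order.TTheory GRing.Theory Num.Theory.
Local Open Scope classical_set_scope.

Section PiecewiseDefs.
Context {T : topologicalType} {N : nat}.
Variables (Xs : 'I_N -> set T) (f : T -> T).

Definition Delta : set T :=
  [set x | exists i j : 'I_N, i != j /\ closure (Xs i) x /\ closure (Xs j) x].

Definition Xtilde : set T := [set x | forall n : nat, ~ Delta (iter n f x)].

Definition is_itinerary (x : T) (theta : nat -> 'I_N) : Prop :=
  forall (t : nat) (i : 'I_N), theta t = i <-> Xs i (iter t f x).

Definition Fmap (i : 'I_N) (A : set T) : set T := closure (f @` (A `&` Xs i)).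

(* A_{i_1 ... i_n} = F_{i_n} o ... o F_{i_1} (X), for s = [:: i_1; ...; i_n] *)
Definition atom_set (s : seq 'I_N) : set T := foldl (fun A i => Fmap i A) setT s.

Definition is_cont_ext (i : 'I_N) (fi : T -> T) : Prop :=
  {within closure (Xs i), continuous fi} /\ (forall x, Xs i x -> fi x = f x).

Definition separation_property (fe : 'I_N -> T -> T) : Prop :=
  (forall i : 'I_N, {in closure (Xs i) &, injective (fe i)}) /\
  (forall i j : 'I_N, i != j -> fe i @` closure (Xs i) `&` fe j @` closure (Xs j) = set0).

End PiecewiseDefs.

From HB Require Import structures.
From mathcomp Require Import all_boot all_order all_algebra.
From mathcomp Require Import all_classical all_reals all_analysis.
Import Order.TTheory GRing.Theory Num.Theory.
Local Open Scope classical_set_scope.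

(* Since X is compact Hausdorff and f_i is continuous, F_i(A) is contained in
   f_i(A ∩ cl X_i) whenever A is closed.  Hence a point f(w) with w ∈ X_j lying
   in F_i(A) is also f_i(z) for some z ∈ A ∩ cl X_i; the separation property
   forces i = j and then injectivity of f_i forces z = w ∈ A.  Atoms are
   closed, so peeling off the last letter of an atom containing f^(t+n)(x)
   recovers one letter of the itinerary at a time. *)

Section Atoms.
Context {T : topologicalType} {N : nat}.
Variables (Xs : 'I_N -> set T) (f : T -> T).

Lemma atom_set_rcons (s : seq 'I_N) (i : 'I_N) :
  atom_set Xs f (rcons s i) = Fmap Xs f i (atom_set Xs f s).
Proof. by rewrite /atom_set foldl_rcons. Qed.

Lemma atom_set_closed (s : seq 'I_N) : closed (atom_set Xs f s).
Proof.
case/lastP: s => [|s i]; first exact: closedT.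
rewrite atom_set_rcons; exact: closed_closure.
Qed.

End Atoms.

Section Separation.
Context {T : topologicalType} {N : nat}.
Variables (Xs : 'I_N -> set T) (f : T -> T) (fe : 'I_N -> T -> T).
Hypotheses (hT : hausdorff_space T) (hcpt : compact [set: T]).
Hypothesis hext : forall i, is_cont_ext Xs f i (fe i).
Hypothesis hsep : separation_property Xs fe.

Lemma Fmap_sub_ext_image {i : 'I_N} {A : set T} : closed A ->
  Fmap Xs f i A `<=` fe i @` (A `&` closure (Xs i)).
Proof.
move=> clA; set C := fe i @` _.
have clC : closed C.
  apply: compact_closed => //; apply: continuous_compact.
    by apply: continuous_subspaceW (hext i).1 => z [].
  apply: (subclosed_compact _ hcpt) => //.
  exact: closedI clA (@closed_closure _ _).
rewrite [X in _ `<=` X](closure_id C).1 //; apply: closureS => _ [z [Az Xz] <-].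
by exists z; [split=> //; exact: subset_closure | rewrite (hext i).2].
Qed.

Lemma Fmap_image_inv {i j : 'I_N} {A : set T} {w : T} :
  closed A -> Xs j w -> Fmap Xs f i A (f w) -> i = j /\ A w.
Proof.
move=> clA Xw /(Fmap_sub_ext_image clA) [z [Az Xz] fez].
have fw : f w = fe j w by rewrite (hext j).2.
have eij : i = j.
  apply/eqP/negP => /negP nij.
  have := hsep.2 i j nij; rewrite -subset0; apply; split.
    by exists z.
  by exists w; [exact: subset_closure | rewrite -fw].
subst j; split=> //.
suff -> : w = z by [].
by apply: (hsep.1 i); rewrite ?inE //; [exact: subset_closure | rewrite fez fw].
Qed.

Lemma itinerary_of_atom {x : T} {theta : nat -> 'I_N} {t : nat} {s : seq 'I_N} :
  is_itinerary Xs f x theta -> atom_set Xs f s (iter (t + size s) f x) ->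
  [seq theta (t + k)%N | k <- iota 0 (size s)] = s.
Proof.
move=> htheta; elim/last_ind: s => [|s i IH] //.
rewrite size_rcons atom_set_rcons addnS => hin.
have Xtheta : Xs (theta (t + size s)%N) (iter (t + size s) f x).
  exact: (htheta _ _).1.
have [-> /IH IHs] := Fmap_image_inv (atom_set_closed Xs f s) Xtheta hin.
by rewrite -addn1 iotaD map_cat IHs /= add0n cats1.
Qed.

End Separation.

Theorem lemma3 (R : realType) (T : pseudoMetricType R) (N : nat)
  (Xs : 'I_N -> set T) (f : T -> T) (fe : 'I_N -> T -> T)
  (hT : hausdorff_space T) (hcpt : compact [set: T])
  (hN : (2 <= N)%N)
  (hopen : forall i, open (Xs i))
  (hne : forall i, Xs i !=set0)
  (hdisj : forall i j, i != j -> Xs i `&` Xs j = set0)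
  (hcover : \bigcup_(i in [set: 'I_N]) closure (Xs i) = [set: T])
  (hext : forall i, is_cont_ext Xs f i (fe i))
  (hsep : separation_property Xs fe)
  (x : T) (hx : Xtilde Xs f x)
  (theta : nat -> 'I_N) (htheta : is_itinerary Xs f x theta)
  (t n : nat) (hn : (1 <= n)%N)
  (s : seq 'I_N) (hs : size s = n)
  (hin : atom_set Xs f s (iter (t + n) f x)) :
  [seq theta (t + k)%N | k <- iota 0 n] = s.
Proof.
subst n; exact: (itinerary_of_atom Xs f fe hT hcpt hext hsep htheta hin).
Qed.
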